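(* If $G$ is a uniformly dense (finite, simple) graph with at least one edge, then its clique number satisfies $\operatorname{cl}(G)\le 2\rho(G)$.
   Context: For $A\subseteq E$, $c(A)$ is the number of components of $(V,A)$, $\operatorname{rank}(A)=|V|-c(A)$, $\rho(A)=|A|/\operatorname{rank}(A)$, $\rho(G)=\rho(E)$; $G$ is uniformly dense if $\rho(A)\le\rho(G)$ for all nonempty $A\subseteq E$. $\operatorname{cl}(G)$ is the largest number of vertices of a clique (pairwise adjacent vertex set). *)

From mathcomp Require Import all_boot all_order all_algebra.
Set Implicit Arguments. Unset Strict Implicit. Unset Printing Implicit Defensive.
Import Order.TTheory GRing.Theory Num.Theory.

(* A finite simple graph: vertex set T (a finType), adjacency e : rel T,
   assumed symmetric and irreflexive in the theorem. Edges are represented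
   as 2-element vertex sets [set x; y]. *)

Definition simple_graph (T : finType) (e : rel T) : Prop :=
  symmetric e /\ irreflexive e.

Definition edges (T : finType) (e : rel T) : {set {set T}} :=
  [set [set x; y] | x in T, y in T & e x y].

Definition sub_adj (T : finType) (A : {set {set T}}) : rel T :=
  fun x y => (x != y) && ([set x; y] \in A).

Definition ncomp (T : finType) (A : {set {set T}}) : nat :=
  n_comp (connect (sub_adj A)) T.

Definition grank (T : finType) (A : {set {set T}}) : nat :=
  #|T| - ncomp A.

Definition rho (T : finType) (A : {set {set T}}) : rat :=
  (#|A|%:R / (grank A)%:R)%R.

Definition rhoG (T : finType) (e : rel T) : rat := rho (edges e).

Definition uniformly_dense (T : finType) (e : rel T) : Prop :=
  forall A : {set {set T}}, A \subset edges e -> A != set0 ->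
    (rho A <= rhoG e)%R.

Definition is_clique (T : finType) (e : rel T) (K : {set T}) : bool :=
  [forall x in K, forall y in K, (x != y) ==> e x y].

Definition clique_number (T : finType) (e : rel T) : nat :=
  \max_(K : {set T} | is_clique e K) #|K|.

From mathcomp Require Import all_boot all_order all_algebra.
From mathcomp Require Import zify.
Set Implicit Arguments. Unset Strict Implicit. Unset Printing Implicit Defensive.
Import Order.TTheory GRing.Theory Num.Theory.

(* A clique K on k >= 2 vertices spans the edge set of all pairs in K: it has
   'C(k, 2) edges, K is one of its components and every other vertex is
   isolated, so its rank is k - 1 and its density is k / 2.  Uniform density
   bounds this by rho(G); since G has an edge, a largest clique has k >= 2. *)

Lemma connect_idem (T : finType) (r : rel T) : connect (connect r) =2 connect r.
Proof.
by move=> x y; apply/idP/idP; [apply: connect_sub | apply: connect1].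
Qed.

Lemma n_comp_one_class (T : finType) (r : rel T) (K : {set T}) :
  K != set0 ->
  (forall x y, connect r x y = (x == y) || (x \in K) && (y \in K)) ->
  n_comp r T = #|~: K|.+1.
Proof.
move=> /set0Pn[x0 x0K] connectE.
have r_sym : connect_sym r.
  by move=> x y; rewrite !connectE eq_sym andbC.
rewrite (n_compC (mem K)) addnC -addn1; congr (_ + _).
- apply: eq_card => x; rewrite !inE /=; apply: andb_idl => xNK.
  by have := connect_root r x; rewrite connectE (negbTE xNK) orbF eq_sym.
- rewrite -(n_comp_connect r_sym x0); apply: eq_n_comp_r => x.
  by rewrite inE connectE x0K /=; case: eqVneq => // <-.
Qed.

Section CliquePairs.

Variables (T : finType) (K : {set T}).

Definition clique_pairs : {set {set T}} :=
  [set B : {set T} | B \subset K & #|B| == 2].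

Lemma card_clique_pairs : #|clique_pairs| = 'C(#|K|, 2).
Proof. exact: cards_draws. Qed.

Lemma sub_adj_clique_pairs x y :
  sub_adj clique_pairs x y = [&& x != y, x \in K & y \in K].
Proof.
rewrite /sub_adj inE subUset !sub1set cards2.
by case: eqVneq; rewrite ?andbT ?andbF.
Qed.

Lemma connect_clique_pairs x y :
  connect (sub_adj clique_pairs) x y = (x == y) || (x \in K) && (y \in K).
Proof.
apply/idP/idP.
- case/connectP=> p; elim: p x => [|z p IHp] x /=; first by move=> _ ->; rewrite eqxx.
  rewrite sub_adj_clique_pairs => /andP[/and3P[_ xK zK] zp] y_last.
  case/orP: (IHp z zp y_last) => [/eqP <-|/andP[_ ->]]; by rewrite xK ?zK orbT.
- case/orP=> [/eqP -> | /andP[xK yK]]; first exact: connect0.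
  case: (eqVneq x y) => [-> | xy]; first exact: connect0.
  by apply: connect1; rewrite sub_adj_clique_pairs xy xK yK.
Qed.

Lemma grank_clique_pairs : K != set0 -> grank clique_pairs = #|K|.-1.
Proof.
move=> K0; rewrite /grank /ncomp (eq_n_comp (connect_idem _)).
rewrite (n_comp_one_class K0 connect_clique_pairs) -(cardsC K).
by rewrite subnS addnK.
Qed.

Lemma rho_clique_pairs : 1 < #|K| -> rho clique_pairs = (#|K|%:R / 2)%R.
Proof.
move=> K2; have K0 : K != set0 by rewrite -card_gt0; lia.
have bin2E : ('C(#|K|, 2) * 2 = #|K| * #|K|.-1)%N.
  by rewrite mulnC -(mul_bin_diag _ 1) bin1.
have K1 : ((#|K|.-1)%:R != 0 :> rat)%R by rewrite pnatr_eq0; lia.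
rewrite /rho grank_clique_pairs // card_clique_pairs.
apply: (canLR (mulfK K1)); rewrite mulrAC -natrM -bin2E natrM.
by rewrite mulfK.
Qed.

End CliquePairs.

Lemma clique_pairs_sub_edges (T : finType) (e : rel T) (K : {set T}) :
  is_clique e K -> clique_pairs K \subset edges e.
Proof.
move=> /forallP clK; apply/subsetP => B.
rewrite inE => /andP[BK /cards2P[x [y [xy BE]]]].
move: BK; rewrite BE subUset !sub1set => /andP[xK yK].
apply/imset2P; exists x y; rewrite ?inE //.
by move: (clK x); rewrite xK => /forall_inP/(_ y yK)/implyP; apply.
Qed.

Lemma clique_card_le_rhoG (T : finType) (e : rel T) (K : {set T}) :
  uniformly_dense e -> is_clique e K -> 1 < #|K| ->
  (#|K|%:R <= 2 * rhoG e :> rat)%R.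
Proof.
move=> dense clK K2.
have pairs0 : clique_pairs K != set0.
  by rewrite -card_gt0 card_clique_pairs bin_gt0.
have := dense _ (clique_pairs_sub_edges clK) pairs0.
rewrite rho_clique_pairs // => le_rho.
by rewrite -ler_pdivrMl // mulrC.
Qed.

Lemma edge_is_clique (T : finType) (e : rel T) x y :
  symmetric e -> e x y -> is_clique e [set x; y].
Proof.
move=> e_sym exy; apply/forall_inP => a aE; apply/forall_inP => b bE.
apply/implyP; move: aE bE; rewrite !inE.
by do 2 case/orP=> /eqP ->; rewrite ?eqxx // e_sym.
Qed.

Lemma clique_number_attained (T : finType) (e : rel T) :
  exists2 K : {set T}, is_clique e K & #|K| = clique_number e.
Proof.
have cl0 : is_clique e set0 by apply/forall_inP => x; rewrite inE.
rewrite /clique_number (bigop.bigmax_eq_arg set0) //.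
by case: arg_maxnP => // K clK _; exists K.
Qed.

Lemma leq_clique_number (T : finType) (e : rel T) (K : {set T}) :
  is_clique e K -> #|K| <= clique_number e.
Proof. exact: bigop.leq_bigmax_cond. Qed.

Theorem proposition3p7 (T : finType) (e : rel T) :
  simple_graph e ->
  edges e != set0 ->
  uniformly_dense e ->
  ((clique_number e)%:R <= 2 * rhoG e :> rat)%R.
Proof.
move=> [e_sym e_irr] /set0Pn[_ /imset2P[x y _]] /[!inE] exy _ dense.
have xy : x != y by apply: contraTneq exy => ->; rewrite e_irr.
have two_le_cl : 1 < clique_number e.
  by have := leq_clique_number (edge_is_clique e_sym exy); rewrite cards2 xy.
have [K clK card_K] := clique_number_attained e.
by rewrite -card_K (clique_card_le_rhoG dense clK) ?card_K.
Qed.
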